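(* Let $F_1,F_2$ be two real quadratic forms on $\mathbf{R}^n$ such that $\alpha F_1+\beta F_2$ is strictly hyperbolic for every $(\alpha,\beta)\in\mathbf{R}^2\setminus\{0\}$. Then there exist $C>0$ and a positive quadratic form $Q\in K_C$ with $\mathrm{Tr}(F_1Q)=\mathrm{Tr}(F_2Q)=0$.
   Context: Quadratic forms are identified with real symmetric $n\times n$ matrices. A symmetric matrix $A$ with largest eigenvalue $\lambda_{\max}(A)$ and smallest eigenvalue $\lambda_{\min}(A)$ is strictly hyperbolic if $1/M<-\lambda_{\max}(A)/\lambda_{\min}(A)<M$ for some $M>0$ (in particular $\lambda_{\max}>0>\lambda_{\min}$). For $C>0$, $K_C$ is the set of symmetric matrices $(a_{ij})$ with $C^{-1}|\xi|^2\le\sum a_{ij}\xi_i\xi_j\le C|\xi|^2$ for all $\xi\in\mathbf{R}^n$. *)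

From HB Require Import structures.
From mathcomp Require Import all_boot all_order all_algebra.
From mathcomp Require Import reals.
Set Implicit Arguments. Unset Strict Implicit. Unset Printing Implicit Defensive.
Import Order.TTheory GRing.Theory Num.Theory.
Local Open Scope ring_scope.

(* Quadratic forms on R^n are identified with symmetric n x n matrices. *)
Definition sym_mx {R : realType} {n : nat} (A : 'M[R]_n) : Prop := A^T = A.

Definition is_lambda_max {R : realType} {n : nat} (A : 'M[R]_n) (l : R) : Prop :=
  eigenvalue A l /\ forall a, eigenvalue A a -> a <= l.

Definition is_lambda_min {R : realType} {n : nat} (A : 'M[R]_n) (l : R) : Prop :=
  eigenvalue A l /\ forall a, eigenvalue A a -> l <= a.

Definition strictly_hyperbolic {R : realType} {n : nat} (A : 'M[R]_n) : Prop :=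
  exists lmax lmin, is_lambda_max A lmax /\ is_lambda_min A lmin /\
    exists M : R, 0 < M /\ M^-1 < - lmax / lmin /\ - lmax / lmin < M.

Definition qform {R : realType} {n : nat} (A : 'M[R]_n) (xi : 'cV[R]_n) : R :=
  (xi^T *m A *m xi) ord0 ord0.

Definition sqnorm {R : realType} {n : nat} (xi : 'cV[R]_n) : R :=
  \sum_(i < n) xi i ord0 ^+ 2.

Definition in_K {R : realType} {n : nat} (C : R) (A : 'M[R]_n) : Prop :=
  sym_mx A /\
  forall xi : 'cV[R]_n, C^-1 * sqnorm xi <= qform A xi /\ qform A xi <= C * sqnorm xi.

From HB Require Import structures.
From mathcomp Require Import all_boot all_order all_algebra.
From mathcomp Require Import classical_sets boolp reals.
From mathcomp Require Import ring lra.
Import Order.TTheory GRing.Theory Num.Theory.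
Local Open Scope ring_scope.
Set Implicit Arguments. Unset Strict Implicit.

(* If every nonzero combination [a F1 + b F2] takes a negative value, the image
   of [xi |-> (F1[xi], F2[xi])] meets every open half-plane of R^2, so every
   vector of the plane, in particular [-(tr F1, tr F2)], is a nonnegative
   combination [c p(u) + c' p(u')] of two of its points. As
   [tr (F (u u^T)) = F[u]], the positive definite matrix
   [Q = 1 + c u u^T + c' u' u'^T] then has [tr (F1 Q) = tr (F2 Q) = 0]. *)

Lemma pair_neq0E (R : realDomainType) (x y : R) :
  ((x, y) != (0, 0)) = (0 < x ^+ 2 + y ^+ 2).
Proof.
rewrite xpair_eqE lt_neqAle addr_ge0 ?sqr_ge0 // andbT [0 == _]eq_sym.
by rewrite paddr_eq0 ?sqr_ge0 // !sqrf_eq0.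
Qed.

Lemma sqr_sum_mul_le (R : realFieldType) (n : nat) (f g : 'I_n -> R) :
  (\sum_i f i * g i) ^+ 2 <= (\sum_i f i ^+ 2) * (\sum_i g i ^+ 2).
Proof.
set X := \sum_i f i ^+ 2; set Y := \sum_i g i ^+ 2; set S := \sum_i f i * g i.
have X0 : 0 <= X by apply: sumr_ge0 => i _; exact: sqr_ge0.
have [X00|Xn0] := eqVneq X 0.
  have f0 i : f i = 0.
    apply/eqP; rewrite -sqrf_eq0; apply/eqP/(psumr_eq0P _ X00) => // j _.
    exact: sqr_ge0.
  have -> : S = 0 by rewrite /S big1 // => i _; rewrite f0 mul0r.
  by rewrite X00 expr2 !mul0r.
(* Lagrange: [X * (X Y - S^2)] is the sum of the squares [(X g i - S f i)^2]. *)
have -> : S ^+ 2 = X * Y - X^-1 * \sum_i (X * g i - S * f i) ^+ 2.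
  have -> : \sum_i (X * g i - S * f i) ^+ 2 =
            \sum_i (X ^+ 2 * g i ^+ 2 - 2 * X * S * (f i * g i) + S ^+ 2 * f i ^+ 2).
    by apply: eq_bigr => i _; ring.
  rewrite !big_split /= sumrN -!mulr_sumr -/X -/Y -/S; field.
  exact: Xn0.
rewrite gerBl mulr_ge0 ?invr_ge0 // sumr_ge0 // => i _; exact: sqr_ge0.
Qed.

Section PlanarCone.
Variables (R : realType) (P : R -> R -> Prop) (w1 w2 : R).
Local Open Scope classical_set_scope.

Definition conic2 := exists x y x' y' c c', P x y /\ P x' y' /\
  0 <= c /\ 0 <= c' /\ c * x + c' * x' = w1 /\ c * y + c' * y' = w2.

Let cross x y := w1 * y - w2 * x.
Let dot x y := w1 * x + w2 * y.

Let ray_scaleE (x y : R) : cross x y = 0 -> dot x y != 0 ->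
  (w1 ^+ 2 + w2 ^+ 2) / dot x y * x = w1 /\
  (w1 ^+ 2 + w2 ^+ 2) / dot x y * y = w2.
Proof.
move=> c0 d0; split; rewrite mulrAC; apply: (canLR (mulfK d0)); apply/eqP.
- have -> : (w1 ^+ 2 + w2 ^+ 2) * x = w1 * dot x y - w2 * cross x y.
    by rewrite /cross /dot; ring.
  by rewrite c0 mulr0 subr0.
- have -> : (w1 ^+ 2 + w2 ^+ 2) * y = w2 * dot x y + w1 * cross x y.
    by rewrite /cross /dot; ring.
  by rewrite c0 mulr0 addr0.
Qed.

Let cone_ray (x y : R) :
  P x y -> cross x y = 0 -> 0 < dot x y -> conic2.
Proof.
move=> Pxy c0 d0; have [ex ey] := ray_scaleE c0 (lt0r_neq0 d0).
exists x, y, x, y, ((w1 ^+ 2 + w2 ^+ 2) / dot x y), 0.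
rewrite !mul0r !addr0; do !split => //.
exact: divr_ge0 (addr_ge0 (sqr_ge0 _) (sqr_ge0 _)) (ltW d0).
Qed.

(* The combination [cross a *: b - cross b *: a] lies on the line through
   [w], on the side of [w] exactly when the last hypothesis holds. *)
Let cone_pair (a1 a2 b1 b2 : R) : P a1 a2 -> P b1 b2 ->
  0 < cross a1 a2 -> cross b1 b2 < 0 ->
  0 < cross a1 a2 * dot b1 b2 - cross b1 b2 * dot a1 a2 -> conic2.
Proof.
move=> Pa Pb ca cb D0.
set p1 := cross a1 a2 * b1 - cross b1 b2 * a1.
set p2 := cross a1 a2 * b2 - cross b1 b2 * a2.
have cp : cross p1 p2 = 0 by rewrite /p1 /p2 /cross; ring.
have dp : dot p1 p2 = cross a1 a2 * dot b1 b2 - cross b1 b2 * dot a1 a2.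
  by rewrite /p1 /p2 /cross /dot; ring.
have Dp : 0 < dot p1 p2 by rewrite dp.
have [e1 e2] := ray_scaleE cp (lt0r_neq0 Dp).
set t := (w1 ^+ 2 + w2 ^+ 2) / dot p1 p2 in e1 e2.
have t0 : 0 <= t := divr_ge0 (addr_ge0 (sqr_ge0 _) (sqr_ge0 _)) (ltW Dp).
exists a1, a2, b1, b2, (t * - cross b1 b2), (t * cross a1 a2).
do !split => //.
- by rewrite mulr_ge0 // oppr_ge0 ltW.
- by rewrite mulr_ge0 // ltW.
- by rewrite -e1 /p1; ring.
- by rewrite -e2 /p2; ring.
Qed.

(* [sup E] is the slope of the extreme ray of the cone, seen from [w]; a
   point of [P] beyond that ray would complete [w] into a conic combination. *)
Lemma conic2_full :
  (forall d1 d2 : R, (d1, d2) != (0, 0) ->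
     exists x y, P x y /\ d1 * x + d2 * y < 0) -> conic2.
Proof.
move=> Hd.
have [|w0] := eqVneq (w1, w2) (0, 0).
  rewrite /conic2 => -[-> ->].
  have /Hd[x [y [Pxy _]]] : (1, 0) != (0, 0) :> R * R by rewrite xpair_eqE oner_eq0.
  by exists x, y, x, y, 0, 0; rewrite !mul0r addr0 lexx.
move: (w0); rewrite pair_neq0E => N0.
apply: contrapT => NC.
have ray_le0 x y : P x y -> cross x y = 0 -> dot x y <= 0.
  by move=> Pxy c0; rewrite leNgt; apply/negP => /(cone_ray Pxy c0).
have pair_le0 a1 a2 b1 b2 : P a1 a2 -> P b1 b2 ->
    0 < cross a1 a2 -> cross b1 b2 < 0 ->
    cross a1 a2 * dot b1 b2 <= cross b1 b2 * dot a1 a2.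
  move=> Pa Pb ca cb; rewrite leNgt -subr_gt0.
  by apply/negP => /(cone_pair Pa Pb ca cb).
have [a1 [a2 [Pa ca]]] : exists x y, P x y /\ 0 < cross x y.
  have /Hd[x [y [Pxy h]]] : (w2, - w1) != (0, 0) by rewrite pair_neq0E sqrrN addrC.
  by exists x, y; split => //; rewrite /cross; lra.
have [b1 [b2 [Pb cb]]] : exists x y, P x y /\ cross x y < 0.
  have /Hd[x [y [Pxy h]]] : (- w2, w1) != (0, 0) by rewrite pair_neq0E sqrrN addrC.
  by exists x, y; split => //; rewrite /cross; lra.
pose E := [set r | exists x y, P x y /\ 0 < cross x y /\ r = dot x y / cross x y].
have ubE x y : P x y -> cross x y < 0 -> ubound E (dot x y / cross x y).
  move=> Pxy cxy r [u [v [Puv [cuv ->]]]].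
  rewrite ler_pdivrMr // mulrAC ler_ndivlMr // [_ * cross u v]mulrC.
  by rewrite [_ * cross x y]mulrC pair_le0.
set m := sup E.
have m_ub : ubound E m.
  by apply: ub_le_sup; exists (dot b1 b2 / cross b1 b2); exact: ubE.
have m_lb x y : P x y -> cross x y < 0 -> m <= dot x y / cross x y.
  move=> Pxy cxy; apply: ge_sup; last exact: ubE.
  by exists (dot a1 a2 / cross a1 a2), a1, a2.
have /Hd[x [y [Pxy]]] : (- (m * w2) - w1, m * w1 - w2) != (0, 0).
  rewrite pair_neq0E.
  have -> : (- (m * w2) - w1) ^+ 2 + (m * w1 - w2) ^+ 2
            = (1 + m ^+ 2) * (w1 ^+ 2 + w2 ^+ 2) by ring.
  by apply: mulr_gt0 => //; have := sqr_ge0 m; lra.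
have -> : (- (m * w2) - w1) * x + (m * w1 - w2) * y
          = m * cross x y - dot x y by rewrite /cross /dot; ring.
rewrite subr_lt0; apply/negP; rewrite -leNgt.
case: (ltgtP (cross x y) 0) => cxy.
- by move: (m_lb _ _ Pxy cxy); rewrite ler_ndivlMr // mulrC.
- have Er : E (dot x y / cross x y) by exists x, y.
  by move: (m_ub _ Er); rewrite ler_pdivrMr // mulrC.
- by rewrite cxy mulr0; exact: ray_le0.
Qed.
End PlanarCone.

Section QuadraticForms.
Variables (R : realType) (n : nat).
Implicit Types (A F : 'M[R]_n) (u xi : 'cV[R]_n).

Lemma sqnormE xi : sqnorm xi = (xi^T *m xi) 0 0.
Proof. by rewrite mxE; apply: eq_bigr => j _; rewrite mxE expr2. Qed.

Lemma sqnorm_ge0 xi : 0 <= sqnorm xi.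
Proof. by apply: sumr_ge0 => i _; exact: sqr_ge0. Qed.

Lemma qform1 xi : qform 1%:M xi = sqnorm xi.
Proof. by rewrite /qform mulmx1 sqnormE. Qed.

Lemma qformD A F xi : qform (A + F) xi = qform A xi + qform F xi.
Proof. by rewrite /qform mulmxDr mulmxDl mxE. Qed.

Lemma qformZ a A xi : qform (a *: A) xi = a * qform A xi.
Proof. by rewrite /qform -scalemxAr -scalemxAl mxE. Qed.

Lemma qform_rank1 u xi : qform (u *m u^T) xi = ((u^T *m xi) 0 0) ^+ 2.
Proof.
rewrite /qform !mulmxA -[xi^T *m u]trmxK trmx_mul trmxK -mulmxA.
by rewrite mxE big_ord1 mxE expr2.
Qed.

Lemma mxtrace_mul_rank1 F u : \tr (F *m (u *m u^T)) = qform F u.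
Proof. by rewrite mulmxA mxtrace_mulC mulmxA /mxtrace big_ord1. Qed.

Lemma sqr_dotmx_le u xi : ((u^T *m xi) 0 0) ^+ 2 <= sqnorm u * sqnorm xi.
Proof.
rewrite mxE; under eq_bigr do rewrite mxE.
exact: (sqr_sum_mul_le (fun j => u j 0) (fun j => xi j 0)).
Qed.

Lemma sqnorm_gt0 xi : xi != 0 -> 0 < sqnorm xi.
Proof.
move=> xi0; rewrite lt_neqAle sqnorm_ge0 andbT eq_sym; apply: contra xi0 => /eqP.
move=> /psumr_eq0P xi_sqr0; apply/eqP/matrixP => i j; rewrite (ord1 j) mxE.
by apply/eqP; rewrite -sqrf_eq0 xi_sqr0 // => k _; exact: sqr_ge0.
Qed.

Lemma strictly_hyperbolic_qform_lt0 A :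
  strictly_hyperbolic A -> exists xi, qform A xi < 0.
Proof.
move=> [lmax [lmin [[_ lmax_ge] [[lmin_eig _] [M [M0 [Mlt _]]]]]]].
have lmin_lt0 : lmin < 0.
  rewrite ltNge; apply/negP => lmin0.
  have : 0 <= lmax / lmin.
    by rewrite divr_ge0 // (le_trans lmin0 (lmax_ge _ lmin_eig)).
  have : 0 < M^-1 by rewrite invr_gt0.
  by move: Mlt; rewrite mulNr; lra.
have [v vA v0] := eigenvalueP lmin_eig.
exists v^T; rewrite /qform trmxK vA -scalemxAl mxE.
have := sqnormE v^T; rewrite trmxK => <-.
by rewrite nmulr_rlt0 // sqnorm_gt0 ?trmx_eq0.
Qed.

Definition psd_bounded (k : R) A :=
  sym_mx A /\ forall xi, 0 <= qform A xi <= k * sqnorm xi.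

Lemma psd_boundedD k k' A F :
  psd_bounded k A -> psd_bounded k' F -> psd_bounded (k + k') (A + F).
Proof.
move=> [symA boundA] [symF boundF].
split; first by rewrite /sym_mx linearD /= symA symF.
move=> xi; rewrite qformD mulrDl.
have /andP[? ?] := boundA xi; have /andP[? ?] := boundF xi.
by apply/andP; split; lra.
Qed.

Lemma psd_bounded_rank1 c u :
  0 <= c -> psd_bounded (c * sqnorm u) (c *: (u *m u^T)).
Proof.
move=> c0; split; first by rewrite /sym_mx linearZ /= trmx_mul trmxK.
move=> xi; rewrite qformZ qform_rank1 -mulrA mulr_ge0 ?sqr_ge0 //=.
by rewrite ler_wpM2l // sqr_dotmx_le.
Qed.

Lemma in_K_1_add k A : 0 <= k -> psd_bounded k A -> in_K (1 + k) (1%:M + A).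
Proof.
move=> k0 [symA boundA]; split; first by rewrite /sym_mx linearD /= trmx1 symA.
move=> xi; rewrite qformD qform1; have /andP[qA0 qAk] := boundA xi.
have s0 := sqnorm_ge0 xi.
split; last by rewrite mulrDl mul1r lerD2l.
have : (1 + k)^-1 <= 1 by rewrite invf_le1; lra.
by move=> /(ler_piMl s0); lra.
Qed.
End QuadraticForms.

Unset Implicit Arguments.

Theorem lemma5p2 (R : realType) (n : nat) (F1 F2 : 'M[R]_n) :
  sym_mx F1 -> sym_mx F2 ->
  (forall a b : R, (a, b) != (0, 0) -> strictly_hyperbolic (a *: F1 + b *: F2)) ->
  exists C : R, 0 < C /\
    exists Q : 'M[R]_n, in_K C Q /\ \tr (F1 *m Q) = 0 /\ \tr (F2 *m Q) = 0.
Proof.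
move=> _ _ hyperbolic.
pose P x y := exists xi, qform F1 xi = x /\ qform F2 xi = y.
have halfplane d1 d2 :
    (d1, d2) != (0, 0) -> exists x y, P x y /\ d1 * x + d2 * y < 0.
  move=> /hyperbolic/strictly_hyperbolic_qform_lt0[xi]; rewrite qformD !qformZ.
  by exists (qform F1 xi), (qform F2 xi); split => //; exists xi.
have [_ [_ [_ [_ [c [c' [[u [<- <-]] [[u' [<- <-]] [c0 [c'0 [tr1 tr2]]]]]]]]]]] :=
  conic2_full (- \tr F1) (- \tr F2) halfplane.
pose Q := 1%:M + (c *: (u *m u^T) + c' *: (u' *m u'^T)).
have trQ F : \tr (F *m Q) = \tr F + (c * qform F u + c' * qform F u').
  by rewrite !mulmxDr !mxtraceD mulmx1 -!scalemxAr !mxtraceZ !mxtrace_mul_rank1.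
have k0 : 0 <= c * sqnorm u + c' * sqnorm u'.
  by rewrite addr_ge0 ?mulr_ge0 ?sqnorm_ge0.
exists (1 + (c * sqnorm u + c' * sqnorm u')); split; first lra.
exists Q; split; last by rewrite !trQ tr1 tr2 !subrr.
apply: in_K_1_add k0 _.
exact: psd_boundedD (psd_bounded_rank1 _ c0) (psd_bounded_rank1 _ c'0).
Qed.
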